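(* Let $(G,\mathscr{T})$ be a Hausdorff topological group which is not $g$-reversible. Then there exists a Hausdorff group topology $\mathscr{T}'$ on $G$ such that $w(G,\mathscr{T}')\le nw(G,\mathscr{T})$ and $(G,\mathscr{T}')$ is not $g$-reversible.
   Context: All topological groups are assumed Hausdorff. A topological group $G$ is called $g$-reversible if every continuous automorphism of $G$ (i.e. every continuous group isomorphism of $G$ onto itself) is an open map. $w(X)$ denotes the weight of a space $X$ (minimal cardinality of a base) and $nw(X)$ its network weight (minimal cardinality of a network). *)

From Stdlib Require Import Classical.

Definition set (T : Type) := T -> Prop.

Definition subset {T} (A B : set T) := forall x, A x -> B x.

Definition is_topology {T : Type} (O : set (set T)) : Prop :=
  O (fun _ => True) /\
  (forall F : set (set T), (forall U, F U -> O U) ->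
      O (fun x => exists U, F U /\ U x)) /\
  (forall U V, O U -> O V -> O (fun x => U x /\ V x)).

Definition hausdorff {T : Type} (O : set (set T)) : Prop :=
  forall x y, x <> y -> exists U V, O U /\ O V /\ U x /\ V y /\
    forall z, ~ (U z /\ V z).

Definition is_group {G : Type} (mul : G -> G -> G) (inv : G -> G) (e : G) : Prop :=
  (forall x y z, mul x (mul y z) = mul (mul x y) z) /\
  (forall x, mul e x = x) /\
  (forall x, mul (inv x) x = e).

Definition group_topology {G : Type} (mul : G -> G -> G) (inv : G -> G)
    (O : set (set G)) : Prop :=
  is_topology O /\
  (forall x y W, O W -> W (mul x y) ->
     exists U V, O U /\ O V /\ U x /\ V y /\
       forall a b, U a -> V b -> W (mul a b)) /\
  (forall W, O W -> O (fun x => W (inv x))).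

Definition continuous {T : Type} (O : set (set T)) (f : T -> T) : Prop :=
  forall U, O U -> O (fun x => U (f x)).

Definition open_map {T : Type} (O : set (set T)) (f : T -> T) : Prop :=
  forall U, O U -> O (fun y => exists x, U x /\ f x = y).

Definition automorphism {G : Type} (mul : G -> G -> G) (f : G -> G) : Prop :=
  (forall x y, f (mul x y) = mul (f x) (f y)) /\
  (forall x y, f x = f y -> x = y) /\
  (forall y, exists x, f x = y).

Definition g_reversible {G : Type} (mul : G -> G -> G) (O : set (set G)) : Prop :=
  forall f, automorphism mul f -> continuous O f -> open_map O f.

Definition is_base {T : Type} (O : set (set T)) (B : set (set T)) : Prop :=
  (forall U, B U -> O U) /\
  (forall U x, O U -> U x -> exists V, B V /\ V x /\ subset V U).

Definition is_network {T : Type} (O : set (set T)) (N : set (set T)) : Prop :=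
  forall U x, O U -> U x -> exists V, N V /\ V x /\ subset V U.

Definition card_le {X Y : Type} (A : set X) (B : set Y) : Prop :=
  exists f : {x | A x} -> {y | B y}, forall a b, f a = f b -> a = b.

From Stdlib Require Import Classical ClassicalEpsilon FunctionalExtensionality PropExtensionality Cantor.
From mathcomp Require classical_sets.

(* Let f be a continuous automorphism of (G, T) that is not open; then some neighbourhood
   U of e has f(U) not a neighbourhood of e. Fix a network N of T of least cardinality; N
   is infinite, as T is Hausdorff and (by the above) not discrete. The neighbourhoods of e
   obtained from U by finitely many halvings, preimages under f, intersections,
   conjugations by one chosen point of each member of N, and choices of a neighbourhood
   of e avoiding a member of N, form a base at e of a Hausdorff group topology T' coarser
   than T. There are at most |N| of them since |N x N| = |N|; f is T'-continuous, and f(U)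
   is still not a T'-neighbourhood of e. Their translates by one point of each member of N
   form a base of T' of size at most |N|. *)

Lemma zorn_chain_union (T : Type) (P : set (set T)) :
  (forall F : set (set T), (forall X, F X -> P X) ->
    (forall X Y, F X -> F Y -> subset X Y \/ subset Y X) ->
    P (fun t => exists X, F X /\ X t)) ->
  exists A, P A /\ forall B, subset A B -> P B -> subset B A.
Proof.
intros H.
destruct (@classical_sets.Zorn_bigcup T P) as [A [PA HA]].
- intros F FP Ftot.
  replace (classical_sets.bigcup F (fun X => X)) with (fun t => exists X, F X /\ X t).
  + apply H; [exact FP|]. intros X Y FX FY.
    destruct (Ftot X Y FX FY) as [h|h]; [left|right]; exact h.
  + apply functional_extensionality; intro t; apply propositional_extensionality.
    split; [intros [X [FX Xt]]; exists X|intros [X FX Xt]; exists X; split]; assumption.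
- exists A. split; [exact PA|]. intros B AB PB t Bt.
  apply NNPP; intro nAt. apply (HA B); [|exact PB].
  split; [exact AB|]. intro BA. exact (nAt (BA t Bt)).
Qed.

Definition inj_into {U V : Type} (X : set U) (Y : set V) (g : U -> V) : Prop :=
  (forall a, X a -> Y (g a)) /\ (forall a b, X a -> X b -> g a = g b -> a = b).

(* Zorn gives a maximal family of selectors s (s i in A i) that are pairwise distinct at
   every index; maximality makes it exhaust some A i, which then injects into every A j
   along the selectors. *)
Lemma exists_least_card (I U : Type) (A : I -> set U) (i0 : I) :
  exists i, forall j, exists g, inj_into (A i) (A j) g.
Proof.
pose (P := fun S : set (I -> U) => (forall s, S s -> forall i, A i (s i)) /\
   (forall i s t, S s -> S t -> s i = t i -> s = t)).
destruct (zorn_chain_union (I -> U) P) as [S [[SA Sinj] Smax]].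
- intros F FP Ftot. split.
  + intros s [X [FX Xs]] i. exact (proj1 (FP X FX) s Xs i).
  + intros i s t [X [FX Xs]] [Y [FY Yt]] E.
    destruct (Ftot X Y FX FY) as [h|h].
    * apply (proj2 (FP Y FY) i); auto.
    * apply (proj2 (FP X FX) i); auto.
- assert (Hfull : exists i, forall a, A i a -> exists s, S s /\ s i = a).
  { apply NNPP; intro Hn.
    assert (Hmiss : forall i, exists a, A i a /\ forall s, S s -> s i <> a).
    { intro i. apply NNPP; intro H2. apply Hn. exists i. intros a Aa.
      apply NNPP; intro H3. apply H2. exists a. split; [exact Aa|].
      intros s Ss E. apply H3. exists s. split; assumption. }
    destruct (choice _ Hmiss) as [t Ht].
    assert (St : S t).
    { apply (Smax (fun s => S s \/ s = t)); [intros s Ss; left; exact Ss| |right; reflexivity].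
      split.
      + intros s [Ss| ->] i; [exact (SA s Ss i)|apply Ht].
      + intros i s u [Ss| ->] [Su| ->] E.
        * exact (Sinj i s u Ss Su E).
        * destruct (proj2 (Ht i) s Ss E).
        * destruct (proj2 (Ht i) u Su (eq_sym E)).
        * reflexivity. }
    exact (proj2 (Ht i0) t St eq_refl). }
destruct Hfull as [i Hi]. exists i. intro j.
pose (sel := fun a => epsilon (inhabits (fun _ => a)) (fun s => S s /\ s i = a)).
assert (Hsel : forall a, A i a -> S (sel a) /\ sel a i = a).
{ intros a Aa. apply (epsilon_spec (inhabits (fun _ => a)) (fun s => S s /\ s i = a)).
  exact (Hi a Aa). }
exists (fun a => sel a j). split.
- intros a Aa. exact (SA _ (proj1 (Hsel a Aa)) j).
- intros a b Aa Ab E.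
  destruct (Hsel a Aa) as [Sa Ea]. destruct (Hsel b Ab) as [Sb Eb].
  rewrite <- Ea, <- Eb, (Sinj j _ _ Sa Sb E). reflexivity.
Qed.

Lemma card_le_total (U : Type) (X Y : set U) :
  (exists g, inj_into X Y g) \/ (exists g, inj_into Y X g).
Proof.
destruct (exists_least_card bool U (fun b => if b then X else Y) true) as [[|] H].
- left. exact (H false).
- right. exact (H true).
Qed.

Lemma inj_into_comp {U V W : Type} (X : set U) (Y : set V) (Z : set W) g h :
  inj_into X Y g -> inj_into Y Z h -> inj_into X Z (fun x => h (g x)).
Proof.
intros [gXY ginj] [hYZ hinj]. split.
- intros a Xa. exact (hYZ _ (gXY a Xa)).
- intros a b Xa Xb E. exact (ginj a b Xa Xb (hinj _ _ (gXY a Xa) (gXY b Xb) E)).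
Qed.

Lemma card_le_of_inj_into {U V : Type} (X : set U) (Y : set V) g : inj_into X Y g -> card_le X Y.
Proof.
intros [gXY ginj].
exists (fun a => exist _ (g (proj1_sig a)) (gXY _ (proj2_sig a))).
intros [a Xa] [b Xb] E. injection E as E. simpl in E.
destruct (ginj a b Xa Xb E). f_equal. apply proof_irrelevance.
Qed.

Definition square_inj {U : Type} (X : set U) (h : U -> U -> U) : Prop :=
  (forall a b, X a -> X b -> X (h a b)) /\
  (forall a b a' b', X a -> X b -> X a' -> X b' -> h a b = h a' b' -> a = a' /\ b = b').

(* [A] injects into two copies of [X], i.e. into [X] x [{u0, u1}], and then into [X] via [h]. *)
Lemma square_inj_of_complement (U : Type) (A X : set U) (h : U -> U -> U) (g : U -> U) (u0 u1 : U) :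
  (forall x, X x -> A x) -> X u0 -> X u1 -> u0 <> u1 -> square_inj X h ->
  inj_into (fun x => A x /\ ~ X x) X g -> exists p, square_inj A p.
Proof.
intros XA Xu0 Xu1 u01 [hX hinj] [gX ginj].
pose (p0 := fun a => if excluded_middle_informative (X a) then h a u0 else h (g a) u1).
assert (p0X : forall a, A a -> X (p0 a)).
{ intros a Aa. unfold p0. destruct (excluded_middle_informative (X a)); apply hX; auto. }
assert (p0inj : forall a b, A a -> A b -> p0 a = p0 b -> a = b).
{ intros a b Aa Ab. unfold p0.
  destruct (excluded_middle_informative (X a)) as [ha|ha];
  destruct (excluded_middle_informative (X b)) as [hb|hb]; intro E.
  - exact (proj1 (hinj _ _ _ _ ha Xu0 hb Xu0 E)).
  - destruct (u01 (proj2 (hinj _ _ _ _ ha Xu0 (gX b (conj Ab hb)) Xu1 E))).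
  - destruct (u01 (eq_sym (proj2 (hinj _ _ _ _ (gX a (conj Aa ha)) Xu1 hb Xu0 E)))).
  - apply ginj; auto.
    exact (proj1 (hinj _ _ _ _ (gX a (conj Aa ha)) Xu1 (gX b (conj Ab hb)) Xu1 E)). }
exists (fun a b => h (p0 a) (p0 b)). split.
- intros a b Aa Ab. apply XA, hX; apply p0X; assumption.
- intros a b a' b' Aa Ab Aa' Ab' E.
  destruct (hinj _ _ _ _ (p0X a Aa) (p0X b Ab) (p0X a' Aa') (p0X b' Ab') E) as [E1 E2].
  split; apply p0inj; assumption.
Qed.

Section InfiniteSquare.
Variables (U : Type) (A : set U) (s : nat -> U).
Hypothesis s_in : forall n, A (s n).
Hypothesis s_inj : forall m n, s m = s n -> m = n.

(* A partial pairing: [R ((x, y), z)] is the graph of an injection of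
   [pdom R] x [pdom R] into [pdom R], where [pdom R] is a subset of [A]. *)
Definition pdom (R : set ((U * U) * U)) (x : U) : Prop := exists z, R ((x, x), z).

Definition pairing_graph (R : set ((U * U) * U)) : Prop :=
  (forall x y z, R ((x, y), z) -> A x /\ A y /\ pdom R x /\ pdom R y /\ pdom R z) /\
  (forall x y, pdom R x -> pdom R y -> exists z, R ((x, y), z)) /\
  (forall x y z z', R ((x, y), z) -> R ((x, y), z') -> z = z') /\
  (forall x y z x' y', R ((x, y), z) -> R ((x', y'), z) -> x = x' /\ y = y').

Lemma pairing_graph_ext R R' : (forall t, R t <-> R' t) -> pairing_graph R -> pairing_graph R'.
Proof.
intros E.
replace R' with R; [exact (fun h => h)|].
apply functional_extensionality; intro t; apply propositional_extensionality; apply E.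
Qed.

Lemma pairing_graph_chain_union (M : set (set ((U * U) * U))) :
  (forall R, M R -> pairing_graph R) ->
  (forall R R', M R -> M R' -> subset R R' \/ subset R' R) ->
  pairing_graph (fun t => exists R, M R /\ R t).
Proof.
intros HL Hc.
assert (dom_union : forall x, pdom (fun t => exists R, M R /\ R t) x <-> exists R, M R /\ pdom R x).
{ intro x; split.
  - intros [z [R [MR Rz]]]. exists R. split; [exact MR|]. exists z; exact Rz.
  - intros [R [MR [z Rz]]]. exists z, R. split; assumption. }
split; [|split; [|split]].
- intros x y z [R [MR Rt]]. destruct (proj1 (HL R MR) x y z Rt) as [Ax [Ay [Dx [Dy Dz]]]].
  repeat split; try assumption; apply dom_union; exists R; split; assumption.
- intros x y Hx Hy. apply dom_union in Hx; apply dom_union in Hy.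
  destruct Hx as [R1 [M1 [z1 S1]]]. destruct Hy as [R2 [M2 [z2 S2]]].
  destruct (Hc R1 R2 M1 M2) as [I|I].
  + destruct (proj1 (proj2 (HL R2 M2)) x y) as [z Hz]; [exists z1; apply I; exact S1|exists z2; exact S2|].
    exists z, R2. split; assumption.
  + destruct (proj1 (proj2 (HL R1 M1)) x y) as [z Hz]; [exists z1; exact S1|exists z2; apply I; exact S2|].
    exists z, R1. split; assumption.
- intros x y z z' [R1 [M1 H1]] [R2 [M2 H2]].
  destruct (Hc R1 R2 M1 M2) as [I|I].
  + apply (proj1 (proj2 (proj2 (HL R2 M2))) x y); [apply I|]; assumption.
  + apply (proj1 (proj2 (proj2 (HL R1 M1))) x y); [|apply I]; assumption.
- intros x y z x' y' [R1 [M1 H1]] [R2 [M2 H2]].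
  destruct (Hc R1 R2 M1 M2) as [I|I].
  + apply (proj2 (proj2 (proj2 (HL R2 M2))) x y z); [apply I|]; assumption.
  + apply (proj2 (proj2 (proj2 (HL R1 M1))) x y z); [|apply I]; assumption.
Qed.

Definition seed_graph (t : (U * U) * U) : Prop :=
  exists m n, t = ((s m, s n), s (Cantor.to_nat (m, n))).

Lemma pdom_seed_graph x : pdom seed_graph x <-> exists m, x = s m.
Proof.
split.
- intros [z [m [n E]]]. exists m. injection E; intros; assumption.
- intros [m ->]. exists (s (Cantor.to_nat (m, m))), m, m. reflexivity.
Qed.

Lemma pairing_graph_seed : pairing_graph seed_graph.
Proof.
split; [|split; [|split]].
- intros x y z [m [n E]]. injection E; intros -> -> ->.
  repeat split; try apply s_in; apply pdom_seed_graph; eauto.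
- intros x y Hx Hy. apply pdom_seed_graph in Hx; apply pdom_seed_graph in Hy.
  destruct Hx as [m ->]; destruct Hy as [n ->].
  exists (s (Cantor.to_nat (m, n))), m, n. reflexivity.
- intros x y z z' [m [n E]] [m' [n' E']].
  injection E as Ex Ey Ez. injection E' as Ex' Ey' Ez'. subst.
  apply s_inj in Ex'. apply s_inj in Ey'. subst. reflexivity.
- intros x y z x' y' [m [n E]] [m' [n' E']].
  injection E as Ex Ey Ez. injection E' as Ex' Ey' Ez'. subst.
  apply s_inj in Ez'.
  assert (P : (m, n) = (m', n')).
  { assert (Q : Cantor.to_nat (m, n) = Cantor.to_nat (m', n')) by exact Ez'.
    pose proof (f_equal Cantor.of_nat Q) as P.
    rewrite (cancel_of_to (m, n)), (cancel_of_to (m', n')) in P. exact P. }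
  injection P as -> ->. split; reflexivity.
Qed.

Lemma pairing_graph_fun R : pairing_graph R -> exists h, square_inj (pdom R) h.
Proof.
intros [R_dom [R_tot [R_fun R_inj]]].
destruct (choice (fun xy z => pdom R (fst xy) -> pdom R (snd xy) -> R ((fst xy, snd xy), z)))
  as [h Hh].
{ intros [x y]. destruct (classic (pdom R x /\ pdom R y)) as [[Dx Dy]|D].
  - destruct (R_tot x y Dx Dy) as [z Hz]. exists z. intros _ _. exact Hz.
  - exists x. intros Dx Dy. destruct (D (conj Dx Dy)). }
exists (fun x y => h (x, y)). split.
- intros x y Dx Dy. exact (proj2 (proj2 (proj2 (proj2 (R_dom _ _ _ (Hh (x, y) Dx Dy)))))).
- intros x y x' y' Dx Dy Dx' Dy' E.
  apply (R_inj x y (h (x, y)) x' y'); [exact (Hh (x, y) Dx Dy)|rewrite E; exact (Hh (x', y') Dx' Dy')].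
Qed.

Section Extension.
Variable R : set ((U * U) * U).
Hypothesis HR : pairing_graph R.
Hypothesis s_dom : forall n, pdom R (s n).
Variable h : U -> U -> U.
Hypothesis Hh : square_inj (pdom R) h.
Variable g : U -> U.
Hypothesis Hg : inj_into (pdom R) (fun x => A x /\ ~ pdom R x) g.

Local Notation S := (pdom R).

Definition ext_dom (x : U) : Prop := S x \/ exists u, S u /\ g u = x.

Definition back (x : U) : U :=
  if excluded_middle_informative (S x) then x
  else epsilon (inhabits x) (fun u => S u /\ g u = x).

(* Records which of [x], [y] lie in the old domain, so that [ext_val] is injective. *)
Definition tag (x y : U) : U :=
  if excluded_middle_informative (S x) then s 0
  else if excluded_middle_informative (S y) then s 1 else s 2.

Definition ext_val (x y : U) : U := g (h (h (back x) (back y)) (tag x y)).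

Definition ext_graph (t : (U * U) * U) : Prop :=
  let '((x, y), z) := t in ext_dom x /\ ext_dom y /\ ~ (S x /\ S y) /\ z = ext_val x y.

Lemma image_not_dom x : (exists u, S u /\ g u = x) -> ~ S x.
Proof. intros [u [Su <-]]. exact (proj2 (proj1 Hg u Su)). Qed.

Lemma ext_dom_A x : ext_dom x -> A x.
Proof.
intros [[z Hz]|[u [Su <-]]]; [exact (proj1 (proj1 HR _ _ _ Hz))|exact (proj1 (proj1 Hg u Su))].
Qed.

Lemma back_spec x : ~ S x -> ext_dom x -> S (back x) /\ g (back x) = x.
Proof.
intros nSx [Sx|Hx]; [destruct (nSx Sx)|].
unfold back. destruct (excluded_middle_informative (S x)) as [Sx|_]; [destruct (nSx Sx)|].
exact (epsilon_spec (inhabits x) (fun u => S u /\ g u = x) Hx).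
Qed.

Lemma back_dom x : ext_dom x -> S (back x).
Proof.
intro Hx. destruct (classic (S x)) as [Sx|nSx].
- unfold back. destruct (excluded_middle_informative (S x)); [exact Sx|contradiction].
- exact (proj1 (back_spec x nSx Hx)).
Qed.

Lemma back_inj x x' : ext_dom x -> ext_dom x' -> (S x <-> S x') -> back x = back x' -> x = x'.
Proof.
intros Hx Hx' Hs E. destruct (classic (S x)) as [Sx|nSx].
- unfold back in E.
  destruct (excluded_middle_informative (S x)); [|contradiction].
  destruct (excluded_middle_informative (S x')); [exact E|tauto].
- assert (nSx' : ~ S x') by tauto.
  rewrite <- (proj2 (back_spec x nSx Hx)), <- (proj2 (back_spec x' nSx' Hx')), E. reflexivity.
Qed.

Lemma tag_dom x y : S (tag x y).
Proof.
unfold tag. destruct (excluded_middle_informative (S x)); [|destruct (excluded_middle_informative (S y))];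
  apply s_dom.
Qed.

Lemma tag_inj x y x' y' : tag x y = tag x' y' -> ~ (S x /\ S y) -> ~ (S x' /\ S y') ->
  (S x <-> S x') /\ (S y <-> S y').
Proof.
assert (s_neq : forall m n, s m = s n -> m <> n -> False) by (intros m n E; apply s_inj in E; auto).
unfold tag.
destruct (excluded_middle_informative (S x)); destruct (excluded_middle_informative (S y));
destruct (excluded_middle_informative (S x')); destruct (excluded_middle_informative (S y'));
intros E N N'; try tauto; exfalso; apply (s_neq _ _ E); discriminate.
Qed.

Lemma ext_val_image x y : ext_dom x -> ext_dom y -> exists u, S u /\ g u = ext_val x y.
Proof.
intros Hx Hy. exists (h (h (back x) (back y)) (tag x y)). split; [|reflexivity].
apply (proj1 Hh); [apply (proj1 Hh); apply back_dom; assumption|apply tag_dom].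
Qed.

Lemma ext_val_inj x y x' y' : ext_dom x -> ext_dom y -> ext_dom x' -> ext_dom y' ->
  ~ (S x /\ S y) -> ~ (S x' /\ S y') -> ext_val x y = ext_val x' y' -> x = x' /\ y = y'.
Proof.
intros Hx Hy Hx' Hy' N N' E.
pose proof (back_dom x Hx) as Bx. pose proof (back_dom y Hy) as By.
pose proof (back_dom x' Hx') as Bx'. pose proof (back_dom y' Hy') as By'.
pose proof (proj1 Hh _ _ Bx By) as Bxy. pose proof (proj1 Hh _ _ Bx' By') as Bxy'.
apply (proj2 Hg) in E; [|apply (proj1 Hh); [exact Bxy|apply tag_dom]
                       |apply (proj1 Hh); [exact Bxy'|apply tag_dom]].
destruct (proj2 Hh _ _ _ _ Bxy (tag_dom x y) Bxy' (tag_dom x' y') E) as [E1 E2].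
destruct (proj2 Hh _ _ _ _ Bx By Bx' By' E1) as [E3 E4].
destruct (tag_inj _ _ _ _ E2 N N') as [C1 C2].
split; apply back_inj; assumption.
Qed.

Lemma pdom_ext_union x : pdom (fun t => R t \/ ext_graph t) x <-> ext_dom x.
Proof.
split.
- intros [z [Rt|Nt]]; [left; exists z; exact Rt|exact (proj1 Nt)].
- intros [Sx|Sx].
  + destruct Sx as [z Hz]. exists z. left; exact Hz.
  + exists (ext_val x x). right. repeat split; try (right; exact Sx).
    intros [Sx0 _]. exact (image_not_dom x Sx Sx0).
Qed.

Lemma pairing_graph_ext_union : pairing_graph (fun t => R t \/ ext_graph t).
Proof.
destruct HR as [R_dom [R_tot [R_fun R_inj]]].
assert (R_old : forall x y z, R ((x, y), z) -> S x /\ S y /\ S z)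
  by (intros x y z Rt; destruct (R_dom _ _ _ Rt) as [_ [_ H]]; exact H).
assert (new_val : forall x y z, ext_graph ((x, y), z) -> ~ S z).
{ intros x y z [Hx [Hy [_ ->]]]. apply image_not_dom, ext_val_image; assumption. }
split; [|split; [|split]].
- intros x y z [Rt|Nt].
  + destruct (R_old _ _ _ Rt) as [Sx [Sy Sz]].
    repeat split; try (apply (R_dom _ _ _ Rt)); apply pdom_ext_union; left; assumption.
  + destruct Nt as [Hx [Hy [_ ->]]].
    repeat split; try (apply ext_dom_A; assumption); try (apply pdom_ext_union; assumption).
    apply pdom_ext_union. right. apply ext_val_image; assumption.
- intros x y Hx Hy. apply pdom_ext_union in Hx; apply pdom_ext_union in Hy.
  destruct (classic (S x /\ S y)) as [[Sx Sy]|n].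
  + destruct (R_tot x y Sx Sy) as [z Hz]. exists z; left; exact Hz.
  + exists (ext_val x y). right. repeat split; assumption.
- intros x y z z' [Rt|Nt] [Rt'|Nt'].
  + exact (R_fun _ _ _ _ Rt Rt').
  + destruct (R_old _ _ _ Rt) as [Sx [Sy _]]. destruct (proj1 (proj2 (proj2 Nt')) (conj Sx Sy)).
  + destruct (R_old _ _ _ Rt') as [Sx [Sy _]]. destruct (proj1 (proj2 (proj2 Nt)) (conj Sx Sy)).
  + rewrite (proj2 (proj2 (proj2 Nt))), (proj2 (proj2 (proj2 Nt'))). reflexivity.
- intros x y z x' y' [Rt|Nt] [Rt'|Nt'].
  + exact (R_inj _ _ _ _ _ Rt Rt').
  + destruct (new_val _ _ _ Nt' (proj2 (proj2 (R_old _ _ _ Rt)))).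
  + destruct (new_val _ _ _ Nt (proj2 (proj2 (R_old _ _ _ Rt')))).
  + destruct Nt as [Hx [Hy [N Ez]]]. destruct Nt' as [Hx' [Hy' [N' Ez']]].
    apply ext_val_inj; try assumption. rewrite <- Ez, <- Ez'. reflexivity.
Qed.

Lemma pairing_graph_extend :
  exists R', subset R R' /\ pairing_graph R' /\ exists t, R' t /\ ~ R t.
Proof.
exists (fun t => R t \/ ext_graph t). split; [intros t Rt; left; exact Rt|].
split; [exact pairing_graph_ext_union|].
pose (x0 := g (s 0)).
assert (Hx0 : exists u, S u /\ g u = x0) by (exists (s 0); split; [apply s_dom|reflexivity]).
exists ((x0, x0), ext_val x0 x0). split.
- right. repeat split; try (right; exact Hx0). intros [Sx0 _]. exact (image_not_dom x0 Hx0 Sx0).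
- intro Rt. apply (image_not_dom x0 Hx0). exists (ext_val x0 x0). exact Rt.
Qed.
End Extension.

(* A maximal partial
   pairing extending [seed_graph] has a domain S with |A \ S| <= |S|, since
   otherwise [pairing_graph_extend] would enlarge it. *)
Theorem exists_square_inj : exists p, square_inj A p.
Proof.
destruct (zorn_chain_union _ (fun E => pairing_graph (fun t => seed_graph t \/ E t))) as [E [HE Emax]].
{ intros F FP Fc.
  pose (M := fun R => R = seed_graph \/ exists X, F X /\ R = (fun t => seed_graph t \/ X t)).
  apply (pairing_graph_ext (fun t => exists R, M R /\ R t)).
  - intro t; split.
    + intros [R [[->|[X [FX ->]]] Rt]]; [left; exact Rt|].
      destruct Rt as [Rt|Xt]; [left; exact Rt|right; exists X; split; assumption].
    + intros [Rt|[X [FX Xt]]].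
      * exists seed_graph. split; [left; reflexivity|exact Rt].
      * exists (fun t => seed_graph t \/ X t).
        split; [right; exists X; split; [exact FX|reflexivity]|right; exact Xt].
  - apply pairing_graph_chain_union.
    + intros R [->|[X [FX ->]]]; [exact pairing_graph_seed|exact (FP X FX)].
    + intros R R' [->|[X [FX ->]]] [->|[Y [FY ->]]].
      * left; intros t h; exact h.
      * left; intros t h; left; exact h.
      * right; intros t h; left; exact h.
      * destruct (Fc X Y FX FY) as [I|I]; [left|right]; intros t [h|h];
          try (left; exact h); right; apply I; exact h. }
set (R := fun t => seed_graph t \/ E t) in HE.
assert (s_dom : forall n, pdom R (s n))
  by (intro n; exists (s (Cantor.to_nat (n, n))); left; exists n, n; reflexivity).
destruct (pairing_graph_fun R HE) as [h Hh].
destruct (card_le_total U (pdom R) (fun x => A x /\ ~ pdom R x)) as [[g Hg]|[g Hg]].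
- exfalso. destruct (pairing_graph_extend R HE s_dom h Hh g Hg) as [R' [RR' [HR' [t [R't nRt]]]]].
  apply nRt. right. apply (Emax R'); [intros u Eu; apply RR'; right; exact Eu| |exact R't].
  apply (pairing_graph_ext R'); [|exact HR'].
  intro u. split; [intro Ru; right; exact Ru|intros [Su|Ru]; [apply RR'; left|]; assumption].
- apply (square_inj_of_complement U A (pdom R) h g (s 0) (s 1)).
  + intros x [z Hz]. exact (proj1 (proj1 HE _ _ _ Hz)).
  + apply s_dom.
  + apply s_dom.
  + intro E01. apply s_inj in E01. discriminate.
  + exact Hh.
  + exact Hg.
Qed.
End InfiniteSquare.

Section Group.
Variables (G : Type) (mul : G -> G -> G) (inv : G -> G) (e : G).
Hypothesis Hgrp : is_group mul inv e.

Lemma mulgA x y z : mul x (mul y z) = mul (mul x y) z.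
Proof. exact (proj1 Hgrp x y z). Qed.

Lemma mul1g x : mul e x = x.
Proof. exact (proj1 (proj2 Hgrp) x). Qed.

Lemma mulVg x : mul (inv x) x = e.
Proof. exact (proj2 (proj2 Hgrp) x). Qed.

Lemma mulgV x : mul x (inv x) = e.
Proof.
assert (H : mul (inv x) (mul x (inv x)) = inv x) by (rewrite mulgA, mulVg, mul1g; reflexivity).
transitivity (mul (mul (inv (inv x)) (inv x)) (mul x (inv x))).
- rewrite mulVg, mul1g. reflexivity.
- rewrite <- mulgA, H. apply mulVg.
Qed.

Lemma mulg1 x : mul x e = x.
Proof. rewrite <- (mulVg x), mulgA, mulgV, mul1g. reflexivity. Qed.

Lemma mulKg x y : mul (inv x) (mul x y) = y.
Proof. rewrite mulgA, mulVg, mul1g. reflexivity. Qed.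

Lemma mulKVg x y : mul x (mul (inv x) y) = y.
Proof. rewrite mulgA, mulgV, mul1g. reflexivity. Qed.

Lemma mulgI x y z : mul x y = mul x z -> y = z.
Proof. intro H. rewrite <- (mulKg x y), H, mulKg. reflexivity. Qed.

Lemma invg_unique x y : mul x y = e -> y = inv x.
Proof. intro H. apply (mulgI x). rewrite H, mulgV. reflexivity. Qed.

Lemma invgK x : inv (inv x) = x.
Proof. symmetry. apply invg_unique, mulVg. Qed.

Lemma invMg x y : inv (mul x y) = mul (inv y) (inv x).
Proof. symmetry. apply invg_unique. rewrite <- mulgA, (mulgA y), mulgV, mul1g, mulgV. reflexivity. Qed.

Lemma invg1 : inv e = e.
Proof. symmetry. apply invg_unique, mul1g. Qed.

Lemma automorphism_e f : automorphism mul f -> f e = e.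
Proof.
intros [f_mul _]. symmetry. apply (mulgI (f e)).
rewrite mulg1, <- f_mul, mul1g. reflexivity.
Qed.
End Group.

Ltac group_simpl Hg :=
  repeat first [ rewrite (invMg _ _ _ _ Hg) | rewrite (invgK _ _ _ _ Hg) | rewrite (invg1 _ _ _ _ Hg)
  | rewrite <- (mulgA _ _ _ _ Hg) | rewrite (mulVg _ _ _ _ Hg) | rewrite (mulgV _ _ _ _ Hg)
  | rewrite (mul1g _ _ _ _ Hg) | rewrite (mulg1 _ _ _ _ Hg) | rewrite (mulKg _ _ _ _ Hg)
  | rewrite (mulKVg _ _ _ _ Hg) ].

Section TopologicalGroup.
Variables (G : Type) (mul : G -> G -> G) (inv : G -> G) (e : G).
Hypothesis Hgrp : is_group mul inv e.
Variable T : set (set G).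
Hypothesis HT : group_topology mul inv T.

Lemma open_of_locally_open (W : set G) :
  (forall x, W x -> exists O, T O /\ O x /\ subset O W) -> T W.
Proof.
intro H. destruct HT as [[_ [T_union _]] _].
replace W with (fun x => exists O, (fun O => T O /\ subset O W) O /\ O x).
- apply T_union. intros O [TO _]; exact TO.
- apply functional_extensionality; intro x; apply propositional_extensionality; split.
  + intros [O [[_ OW] Ox]]. exact (OW x Ox).
  + intro Wx. destruct (H x Wx) as [O [TO [Ox OW]]]. exists O. auto.
Qed.

Lemma open_setT : T (fun _ => True).
Proof. exact (proj1 (proj1 HT)). Qed.

Lemma open_setI U V : T U -> T V -> T (fun x => U x /\ V x).
Proof. exact (proj2 (proj2 (proj1 HT)) U V). Qed.

Lemma open_inv W : T W -> T (fun x => W (inv x)).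
Proof. exact (proj2 (proj2 HT) W). Qed.

Lemma open_ltrans (W : set G) a : T W -> T (fun y => W (mul a y)).
Proof.
intro TW. apply open_of_locally_open. intros y Wy.
destruct (proj1 (proj2 HT) a y W TW Wy) as [U [V [TU [TV [Ua [Vy H]]]]]].
exists V. repeat split; auto. intros z Vz. exact (H a z Ua Vz).
Qed.

Lemma open_rtrans (W : set G) a : T W -> T (fun y => W (mul y a)).
Proof.
intro TW. apply open_of_locally_open. intros y Wy.
destruct (proj1 (proj2 HT) y a W TW Wy) as [U [V [TU [TV [Uy [Va H]]]]]].
exists U. repeat split; auto. intros z Uz. exact (H z a Uz Va).
Qed.

Definition nbhd_e (V : set G) : Prop := T V /\ V e.

Definition halves (V V' : set G) : Prop := forall a b, V' a -> V' b ->
  V (mul a b) /\ V (mul a (inv b)) /\ V (mul (inv a) b).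

Lemma exists_halves V : nbhd_e V -> exists V', nbhd_e V' /\ halves V V'.
Proof.
intros [TV Ve].
assert (Vee : V (mul e e)) by (rewrite (mul1g _ _ _ _ Hgrp); exact Ve).
destruct (proj1 (proj2 HT) e e V TV Vee) as [U1 [U2 [TU1 [TU2 [U1e [U2e H]]]]]].
exists (fun x => (U1 x /\ U2 x) /\ (U1 (inv x) /\ U2 (inv x))). split.
- split.
  + apply open_setI; apply open_setI; try assumption; apply open_inv; assumption.
  + rewrite (invg1 _ _ _ _ Hgrp). tauto.
- intros a b [[a1 a2] [a3 a4]] [[b1 b2] [b3 b4]]. repeat split; apply H; assumption.
Qed.

Lemma nbhd_e_setT : nbhd_e (fun _ => True).
Proof. split; [exact open_setT|exact I]. Qed.

Definition half (V : set G) : set G :=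
  epsilon (inhabits (fun _ => True)) (fun V' => nbhd_e V' /\ (nbhd_e V -> halves V V')).

Lemma half_spec V : nbhd_e (half V) /\ (nbhd_e V -> halves V (half V)).
Proof.
apply (epsilon_spec _ (fun V' => nbhd_e V' /\ (nbhd_e V -> halves V V'))).
destruct (classic (nbhd_e V)) as [NV|NV].
- destruct (exists_halves V NV) as [V' [NV' HV']]. exists V'. auto.
- exists (fun _ => True). split; [exact nbhd_e_setT|intro; contradiction].
Qed.

Lemma half_nbhd V : nbhd_e (half V).
Proof. exact (proj1 (half_spec V)). Qed.

Lemma halves_half V : nbhd_e V -> halves V (half V).
Proof. exact (proj2 (half_spec V)). Qed.

Lemma half_sub V : nbhd_e V -> subset (half V) V.
Proof.
intros NV a Ha. destruct (halves_half V NV a e Ha (proj2 (half_nbhd V))) as [H _].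
rewrite (mulg1 _ _ _ _ Hgrp) in H. exact H.
Qed.

Definition disjoint (A B : set G) : Prop := forall x, A x -> ~ B x.

Definition sep_nbhd (b : set G) : set G :=
  epsilon (inhabits (fun _ => True))
    (fun O => nbhd_e O /\ ((exists O', nbhd_e O' /\ disjoint b O') -> disjoint b O)).

Lemma sep_nbhd_spec b : nbhd_e (sep_nbhd b) /\
  ((exists O, nbhd_e O /\ disjoint b O) -> disjoint b (sep_nbhd b)).
Proof.
apply (epsilon_spec _ (fun O => nbhd_e O /\ ((exists O', nbhd_e O' /\ disjoint b O') -> disjoint b O))).
destruct (classic (exists O, nbhd_e O /\ disjoint b O)) as [[O [NO DO]]|H].
- exists O. auto.
- exists (fun _ => True). split; [exact nbhd_e_setT|intro; contradiction].
Qed.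

Definition conj_nbhd (X : set G) (d : G) : set G :=
  fun u => X (mul d (mul u (inv d))) /\ X (mul d (mul (inv u) (inv d))).

Lemma conj_nbhd_e X d : nbhd_e X -> nbhd_e (conj_nbhd X d).
Proof.
intros [TX Xe]. split.
- assert (TdXd : T (fun u => X (mul d (mul u (inv d))))).
  { apply (open_rtrans (fun y => X (mul d y))), open_ltrans, TX. }
  apply open_setI; [exact TdXd|exact (open_inv _ TdXd)].
- unfold conj_nbhd. group_simpl Hgrp. split; exact Xe.
Qed.

Definition pick (b : set G) : G := epsilon (inhabits e) b.

Lemma pick_in b : (exists x, b x) -> b (pick b).
Proof. exact (epsilon_spec (inhabits e) b). Qed.

Lemma not_g_reversible_at_e : ~ g_reversible mul T ->
  exists f, automorphism mul f /\ continuous T f /\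
  exists U1, nbhd_e U1 /\ forall O, nbhd_e O -> ~ (forall y, O y -> exists x, U1 x /\ f x = y).
Proof.
intro Hnr. apply not_all_ex_not in Hnr. destruct Hnr as [f Hnf].
apply imply_to_and in Hnf. destruct Hnf as [Hf Hnf].
apply imply_to_and in Hnf. destruct Hnf as [Hfc Hno].
exists f. split; [exact Hf|]. split; [exact Hfc|].
apply not_all_ex_not in Hno. destruct Hno as [U0 Hno].
apply imply_to_and in Hno. destruct Hno as [TU0 Hno].
assert (Hy : exists y0, (exists x, U0 x /\ f x = y0) /\ forall O, T O -> O y0 ->
            ~ (forall y, O y -> exists x, U0 x /\ f x = y)).
{ apply NNPP; intro H1. apply Hno. apply open_of_locally_open. intros y Hy0.
  apply NNPP; intro H2. apply H1. exists y. split; [exact Hy0|].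
  intros O TO Oy HO. apply H2. exists O. split; [exact TO|split; [exact Oy|exact HO]]. }
destruct Hy as [y0 [[x0 [Ux0 <-]] Hy0]].
exists (fun u => U0 (mul x0 u)). split.
{ split; [apply open_ltrans; exact TU0|rewrite (mulg1 _ _ _ _ Hgrp); exact Ux0]. }
intros O [TO Oe] HO.
apply (Hy0 (fun y => O (mul (inv (f x0)) y))).
- apply open_ltrans. exact TO.
- rewrite (mulVg _ _ _ _ Hgrp). exact Oe.
- intros y Oy. destruct (HO _ Oy) as [x [Ux fx]]. exists (mul x0 x). split; [exact Ux|].
  rewrite (proj1 Hf), fx. group_simpl Hgrp. reflexivity.
Qed.

Section InfiniteNetwork.
Hypothesis HH : hausdorff T.
Variable N0 : set (set G).
Hypothesis HN0 : is_network T N0.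
Hypothesis not_discrete : forall O, nbhd_e O -> exists x, O x /\ x <> e.

Lemma network_shrink O : nbhd_e O -> exists b O',
  N0 b /\ (exists x, b x) /\ subset b O /\ nbhd_e O' /\ subset O' O /\ forall x, b x -> ~ O' x.
Proof.
intros [TO Oe].
destruct (not_discrete O (conj TO Oe)) as [x [Ox ne]].
destruct (HH e x (fun h => ne (eq_sym h))) as [P [Q [TP [TQ [Pe [Qx PQ]]]]]].
destruct (HN0 (fun z => O z /\ Q z) x (open_setI _ _ TO TQ) (conj Ox Qx)) as [b [Nb [bx bOQ]]].
exists b, (fun z => P z /\ O z).
split; [exact Nb|]. split; [exists x; exact bx|]. split; [intros z bz; exact (proj1 (bOQ z bz))|].
split; [split; [apply open_setI; assumption|split; assumption]|].
split; [intros z [_ Oz]; exact Oz|].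
intros z bz [Pz _]. exact (PQ z (conj Pz (proj2 (bOQ z bz)))).
Qed.

(* Each step picks a nonempty member of [N0] inside the current neighbourhood and then
   shrinks the neighbourhood to avoid it, so later members miss all earlier ones. *)
Lemma network_injective_seq : exists s : nat -> set G, (forall n, N0 (s n)) /\
  forall m n, s m = s n -> m = n.
Proof.
destruct (choice (fun O (bO' : set G * set G) => nbhd_e O -> let (b, O') := bO' in
  N0 b /\ (exists x, b x) /\ subset b O /\ nbhd_e O' /\ subset O' O /\ forall x, b x -> ~ O' x))
  as [step Hstep].
{ intro O. destruct (classic (nbhd_e O)) as [NO|NO].
  - destruct (network_shrink O NO) as [b [O' H]]. exists (b, O'). intros _. exact H.
  - exists (O, O). intro h. destruct (NO h). }
pose (O := fix O n := match n with 0 => fun _ => True | S m => snd (step (O m)) end).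
assert (O_nbhd : forall n, nbhd_e (O n)).
{ induction n as [|n IH]; [exact nbhd_e_setT|].
  simpl. generalize (Hstep (O n) IH). destruct (step (O n)). simpl. tauto. }
assert (Hs : forall n, N0 (fst (step (O n))) /\ (exists x, fst (step (O n)) x) /\
  subset (fst (step (O n))) (O n) /\ forall x, fst (step (O n)) x -> ~ O (S n) x).
{ intro n. simpl. generalize (Hstep (O n) (O_nbhd n)). destruct (step (O n)). simpl. tauto. }
assert (O_decr : forall n k, subset (O (k + n)) (O n)).
{ intros n k. induction k as [|k IH]; [intros x h; exact h|].
  intros x Hx. apply IH. simpl in Hx. generalize (Hstep (O (k + n)) (O_nbhd _)).
  destruct (step (O (k + n))) as [b O']. simpl in Hx. intros [_ [_ [_ [_ [O'O _]]]]]. exact (O'O x Hx). }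
assert (distinct : forall m n, n < m -> fst (step (O m)) <> fst (step (O n))).
{ intros m n lt E. destruct (Hs m) as [_ [[x bx] [bO _]]].
  assert (x_in : O (S n) x).
  { apply (O_decr (S n) (m - S n)). replace (m - S n + S n) with m by (symmetry; apply PeanoNat.Nat.sub_add, lt).
    exact (bO x bx). }
  rewrite E in bx. exact (proj2 (proj2 (proj2 (Hs n))) x bx x_in). }
exists (fun n => fst (step (O n))). split; [intro n; apply Hs|].
intros m n E. destruct (PeanoNat.Nat.lt_total m n) as [h|[h|h]].
- destruct (distinct n m h (eq_sym E)).
- exact h.
- destruct (distinct m n h E).
Qed.
End InfiniteNetwork.

Section Coarsening.
Hypothesis HH : hausdorff T.
Variable f : G -> G.
Hypothesis Hf : automorphism mul f.
Hypothesis Hfc : continuous T f.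
Variable U1 : set G.
Hypothesis NU1 : nbhd_e U1.
Variable N0 : set (set G).
Hypothesis HN0 : is_network T N0.

(* Terms for the neighbourhoods of [e] that generate the coarser topology;
   [valid] requires every label [b : set G] to be a member of [N0]. *)
Inductive code : Type :=
| cU1
| cSep (b : set G)
| cHalf (c : code)
| cConj (c : code) (b : set G)
| cF (c : code)
| cInt (c1 c2 : code).

Fixpoint sem (c : code) : set G :=
  match c with
  | cU1 => U1
  | cSep b => sep_nbhd b
  | cHalf c => half (sem c)
  | cConj c b => conj_nbhd (half (half (sem c))) (pick b)
  | cF c => fun u => sem c (f u)
  | cInt c1 c2 => fun x => sem c1 x /\ sem c2 x
  end.

Fixpoint valid (c : code) : Prop :=
  match c with
  | cU1 => True
  | cSep b => N0 b
  | cHalf c => valid c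
  | cConj c b => valid c /\ N0 b
  | cF c => valid c
  | cInt c1 c2 => valid c1 /\ valid c2
  end.

Lemma sem_nbhd c : nbhd_e (sem c).
Proof.
induction c as [| b | c IH | c IH b | c IH | c1 IH1 c2 IH2]; simpl.
- exact NU1.
- exact (proj1 (sep_nbhd_spec b)).
- apply half_nbhd.
- apply conj_nbhd_e, half_nbhd.
- destruct IH as [TV Ve].
  split; [exact (Hfc _ TV)|rewrite (automorphism_e _ _ _ _ Hgrp f Hf); exact Ve].
- destruct IH1, IH2. split; [apply open_setI; assumption|split; assumption].
Qed.

Lemma sem_e c : sem c e.
Proof. exact (proj2 (sem_nbhd c)). Qed.

Lemma halves_sem_half c : halves (sem c) (sem (cHalf c)).
Proof. exact (halves_half _ (sem_nbhd c)). Qed.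

Lemma sem_half_sub c : subset (sem (cHalf c)) (sem c).
Proof. exact (half_sub _ (sem_nbhd c)). Qed.

(* Conjugation by [g] is approximated by conjugation by a point [d] of a network member
   near [g]: [g u g^-1 = (g d^-1) (d u d^-1) (g d^-1)^-1] with [g d^-1] small. *)
Lemma exists_code_conj c g : valid c -> exists c', valid c' /\ forall u, sem c' u ->
  sem c (mul g (mul u (inv g))) /\ sem c (mul g (mul (inv u) (inv g))).
Proof.
intro vc.
set (V := sem c). set (V1 := half V). set (V2 := half V1).
assert (NV : nbhd_e V) by apply sem_nbhd.
assert (NV1 : nbhd_e V1) by apply half_nbhd.
assert (NV2 : nbhd_e V2) by apply half_nbhd.
assert (triple : forall a b c0, V2 a -> V2 b -> V2 c0 -> V (mul a (mul b (inv c0)))).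
{ intros a b c0 Ha Hb Hc. destruct (halves_half V1 NV1 b c0 Hb Hc) as [_ [H1 _]].
  apply (halves_half V NV a _ (half_sub V1 NV1 a Ha) H1). }
pose (O := fun z => V2 (mul g (inv z))).
assert (TO : T O) by apply (open_inv (fun y => V2 (mul g y))), open_ltrans, NV2.
assert (Og : O g) by (unfold O; rewrite (mulgV _ _ _ _ Hgrp); exact (proj2 NV2)).
destruct (HN0 O g TO Og) as [b [Nb [bg bO]]].
exists (cConj c b). split; [split; assumption|].
intros u [H1 H2]. fold V V1 V2 in H1, H2.
set (d := pick b) in *.
assert (Hgd : V2 (mul g (inv d))) by (apply bO, pick_in; exists g; exact bg).
split.
- replace (mul g (mul u (inv g))) with
     (mul (mul g (inv d)) (mul (mul d (mul u (inv d))) (inv (mul g (inv d)))))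
    by (group_simpl Hgrp; reflexivity).
  apply triple; assumption.
- replace (mul g (mul (inv u) (inv g))) with
     (mul (mul g (inv d)) (mul (mul d (mul (inv u) (inv d))) (inv (mul g (inv d)))))
    by (group_simpl Hgrp; reflexivity).
  apply triple; assumption.
Qed.

Lemma exists_code_sep g : g <> e -> exists c, valid c /\ ~ sem c g.
Proof.
intro ne.
destruct (HH e g (fun h => ne (eq_sym h))) as [O [W [TO [TW [Oe [Wg D]]]]]].
destruct (HN0 W g TW Wg) as [b [Nb [bg bW]]].
exists (cSep b). split; [exact Nb|]. simpl.
apply (proj2 (sep_nbhd_spec b)); [|exact bg].
exists O. split; [split; assumption|]. intros x bx Ox. exact (D x (conj Ox (bW x bx))).
Qed.

Definition coarse (W : set G) : Prop :=
  forall x, W x -> exists c, valid c /\ forall u, sem c u -> W (mul x u).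

(* The interior of the translate [x (sem c)] for [coarse]. *)
Definition ball (x : G) (c : code) : set G :=
  fun z => exists c', valid c' /\ forall w, sem c' w -> sem c (mul (inv x) (mul z w)).

Lemma coarse_ball x c : coarse (ball x c).
Proof.
intros z [c' [vc' H]]. exists (cHalf c'). split; [exact vc'|].
intros u Hu. exists (cHalf c'). split; [exact vc'|]. intros w Hw.
replace (mul (inv x) (mul (mul z u) w)) with (mul (inv x) (mul z (mul u w)))
  by (group_simpl Hgrp; reflexivity).
exact (H _ (proj1 (halves_sem_half c' u w Hu Hw))).
Qed.

Lemma ball_center x c : valid c -> ball x c x.
Proof. intro vc. exists c. split; [exact vc|]. intros w Hw. group_simpl Hgrp. exact Hw. Qed.

Lemma ball_sub x c z : ball x c z -> sem c (mul (inv x) z).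
Proof.
intros [c' [_ H]]. pose proof (H e (sem_e c')) as H'. rewrite (mulg1 _ _ _ _ Hgrp) in H'. exact H'.
Qed.

Lemma coarse_topology : is_topology coarse.
Proof.
split; [|split].
- intros x _. exists cU1. split; [exact I|]. intros; exact I.
- intros F HF x [U [FU Ux]]. destruct (HF U FU x Ux) as [c [vc H]].
  exists c. split; [exact vc|]. intros u Hu. exists U. split; [exact FU|exact (H u Hu)].
- intros U V TU TV x [Ux Vx]. destruct (TU x Ux) as [c1 [v1 H1]]. destruct (TV x Vx) as [c2 [v2 H2]].
  exists (cInt c1 c2). split; [split; assumption|]. intros u [h1 h2]. split; auto.
Qed.

Lemma coarse_sub W : coarse W -> T W.
Proof.
intro HW. apply open_of_locally_open. intros x Wx. destruct (HW x Wx) as [c [vc H]].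
exists (fun z => sem c (mul (inv x) z)). split; [|split].
- apply open_ltrans. exact (proj1 (sem_nbhd c)).
- rewrite (mulVg _ _ _ _ Hgrp). apply sem_e.
- intros y Hy. pose proof (H _ Hy) as H'. rewrite (mulKVg _ _ _ _ Hgrp) in H'. exact H'.
Qed.

Lemma coarse_group_topology : group_topology mul inv coarse.
Proof.
split; [exact coarse_topology|split].
- intros x y W TW Wxy. destruct (TW _ Wxy) as [c [vc Hc]].
  destruct (exists_code_conj (cHalf c) (inv y) vc) as [c2 [vc2 Hc2]].
  exists (ball x c2), (ball y (cHalf c)).
  split; [apply coarse_ball|]. split; [apply coarse_ball|].
  split; [apply ball_center; exact vc2|]. split; [apply ball_center; exact vc|].
  intros a b Ha Hb. apply ball_sub in Ha. apply ball_sub in Hb.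
  pose proof (proj1 (halves_sem_half c _ _ (proj1 (Hc2 _ Ha)) Hb)) as Hab.
  replace (mul a b) with
    (mul (mul x y) (mul (mul (inv y) (mul (mul (inv x) a) (inv (inv y)))) (mul (inv y) b)))
    by (group_simpl Hgrp; reflexivity).
  exact (Hc _ Hab).
- intros W TW z Wz. destruct (TW _ Wz) as [c [vc Hc]].
  destruct (exists_code_conj c z vc) as [c2 [vc2 Hc2]].
  exists c2. split; [exact vc2|]. intros u Hu.
  replace (inv (mul z u)) with (mul (inv z) (mul z (mul (inv u) (inv z))))
    by (group_simpl Hgrp; reflexivity).
  exact (Hc _ (proj2 (Hc2 u Hu))).
Qed.

Lemma coarse_hausdorff : hausdorff coarse.
Proof.
intros x y nxy.
assert (ne : mul (inv x) y <> e).
{ intro h. apply nxy. rewrite <- (mulKVg _ _ _ _ Hgrp x y), h, (mulg1 _ _ _ _ Hgrp). reflexivity. }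
destruct (exists_code_sep _ ne) as [c [vc Hc]].
exists (ball x (cHalf c)), (ball y (cHalf c)).
split; [apply coarse_ball|]. split; [apply coarse_ball|].
split; [apply ball_center; exact vc|]. split; [apply ball_center; exact vc|].
intros z [Hx Hy]. apply ball_sub in Hx. apply ball_sub in Hy.
apply Hc.
replace (mul (inv x) y) with (mul (mul (inv x) z) (inv (mul (inv y) z)))
  by (group_simpl Hgrp; reflexivity).
exact (proj1 (proj2 (halves_sem_half c _ _ Hx Hy))).
Qed.

Definition coarse_base (W : set G) : Prop :=
  exists b c, N0 b /\ valid c /\ W = ball (pick b) c.

Lemma is_base_coarse_base : is_base coarse coarse_base.
Proof.
split.
- intros W [b [c [_ [_ ->]]]]. apply coarse_ball.
- intros W x TW Wx. destruct (TW x Wx) as [c [vc Hc]].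
  set (c1 := cHalf c). set (c2 := cHalf c1).
  destruct (HN0 _ x (coarse_sub _ (coarse_ball x c2)) (ball_center x c2 vc)) as [b [Nb [bx bO]]].
  set (d := pick b).
  assert (Hd : sem c2 (mul (inv x) d)) by (apply ball_sub, bO, pick_in; exists x; exact bx).
  exists (ball d c1). split; [exists b, c1; split; [exact Nb|split; [exact vc|reflexivity]]|].
  split.
  + exists c2. split; [exact vc|]. intros w Hw.
    replace (mul (inv d) (mul x w)) with (mul (inv (mul (inv x) d)) w)
      by (group_simpl Hgrp; reflexivity).
    exact (proj2 (proj2 (halves_sem_half c1 _ _ Hd Hw))).
  + intros z Hz. apply ball_sub in Hz.
    pose proof (proj1 (halves_sem_half c _ _ (sem_half_sub c1 _ Hd) Hz)) as Hxz.
    replace z with (mul x (mul (mul (inv x) d) (mul (inv d) z))) by (group_simpl Hgrp; reflexivity).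
    exact (Hc _ Hxz).
Qed.

Lemma continuous_coarse : continuous coarse f.
Proof.
intros W TW x Wfx. destruct (TW _ Wfx) as [c [vc Hc]].
exists (cF c). split; [exact vc|]. intros u Hu. simpl in Hu.
rewrite (proj1 Hf). exact (Hc _ Hu).
Qed.

Hypothesis f_U1_not_nbhd : forall O, nbhd_e O -> ~ (forall y, O y -> exists x, U1 x /\ f x = y).

Lemma not_open_map_coarse : ~ open_map coarse f.
Proof.
intro Hop.
pose (W := fun y => exists x, ball e cU1 x /\ f x = y).
assert (NW : nbhd_e W).
{ split; [exact (coarse_sub _ (Hop _ (coarse_ball e cU1)))|].
  exists e. split; [apply ball_center; exact I|apply (automorphism_e _ _ _ _ Hgrp f Hf)]. }
apply (f_U1_not_nbhd W NW).
intros y [x [Bx <-]]. exists x. split; [|reflexivity].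
apply ball_sub in Bx. rewrite (invg1 _ _ _ _ Hgrp), (mul1g _ _ _ _ Hgrp) in Bx. exact Bx.
Qed.
Section Encoding.
Variable pair : set G -> set G -> set G.
Hypothesis pair_inj : square_inj N0 pair.
Variable label : nat -> set G.
Hypothesis label_N0 : forall n, N0 (label n).
Hypothesis label_inj : forall m n, label m = label n -> m = n.

Fixpoint encode (c : code) : set G :=
  match c with
  | cU1 => pair (label 0) (label 0)
  | cSep b => pair (label 1) b
  | cHalf c => pair (label 2) (encode c)
  | cConj c b => pair (label 3) (pair (encode c) b)
  | cF c => pair (label 4) (encode c)
  | cInt c1 c2 => pair (label 5) (pair (encode c1) (encode c2))
  end.

Lemma encode_N0 c : valid c -> N0 (encode c).
Proof.
destruct pair_inj as [pair_N0 _].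
induction c; simpl; intro v; try destruct v; repeat apply pair_N0; auto.
Qed.

Lemma encode_inj c1 c2 : valid c1 -> valid c2 -> encode c1 = encode c2 -> c1 = c2.
Proof.
destruct pair_inj as [pair_N0 pinj].
revert c2; induction c1; intros c2 v1 v2 E; destruct c2; simpl in v1, v2, E;
  apply pinj in E; try (destruct v1); try (destruct v2); repeat apply pair_N0; try apply encode_N0; auto;
  destruct E as [E1 E2]; apply label_inj in E1; try discriminate;
  first [ reflexivity | (rewrite E2; reflexivity) | (f_equal; apply IHc1; assumption)
        | (apply pinj in E2; try apply encode_N0; auto; destruct E2 as [E2 E3]; f_equal; auto) ].
Qed.

Lemma coarse_base_inj_N0 : exists g, inj_into coarse_base N0 g.
Proof.
pose (rep := fun W => epsilon (inhabits (W, cU1))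
  (fun bc : set G * code => N0 (fst bc) /\ valid (snd bc) /\ W = ball (pick (fst bc)) (snd bc))).
assert (Hrep : forall W, coarse_base W ->
  N0 (fst (rep W)) /\ valid (snd (rep W)) /\ W = ball (pick (fst (rep W))) (snd (rep W))).
{ intros W [b [c H]]. apply (epsilon_spec (inhabits (W, cU1))). exists (b, c). exact H. }
exists (fun W => pair (fst (rep W)) (encode (snd (rep W)))). split.
- intros W HW. destruct (Hrep W HW) as [Nb [vc _]]. apply (proj1 pair_inj); [exact Nb|apply encode_N0, vc].
- intros W W' HW HW' E.
  destruct (Hrep W HW) as [Nb [vc EW]]. destruct (Hrep W' HW') as [Nb' [vc' EW']].
  destruct (proj2 pair_inj _ _ _ _ Nb (encode_N0 _ vc) Nb' (encode_N0 _ vc') E) as [Eb Ec].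
  rewrite EW, EW', Eb, (encode_inj _ _ vc vc' Ec). reflexivity.
Qed.
End Encoding.
End Coarsening.
End TopologicalGroup.

Theorem theorem6p4 (G : Type) (mul : G -> G -> G) (inv : G -> G) (e : G)
  (Hgrp : is_group mul inv e)
  (T : set (set G)) (HT : group_topology mul inv T) (HH : hausdorff T)
  (Hnr : ~ g_reversible mul T) :
  exists T' : set (set G),
    group_topology mul inv T' /\ hausdorff T' /\
    (exists B, is_base T' B /\ forall N, is_network T N -> card_le B N) /\
    ~ g_reversible mul T'.
Proof.
destruct (not_g_reversible_at_e G mul inv e Hgrp T HT Hnr) as [f [Hf [Hfc [U1 [NU1 HU1]]]]].
assert (T_network : is_network T T) by (intros U x TU Ux; exists U; split; [|split]; auto; intros y h; exact h).
destruct (exists_least_card {N | is_network T N} _ (@proj1_sig _ _) (exist _ T T_network))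
  as [[N0 HN0] N0_least].
assert (not_discrete : forall O, nbhd_e G e T O -> exists x, O x /\ x <> e).
{ intros O NO. apply NNPP; intro H. apply (HU1 O NO). intros y Oy.
  replace y with e by (apply NNPP; intro ne; apply H; exists y; auto).
  exists e. split; [exact (proj2 NU1)|exact (automorphism_e G mul inv e Hgrp f Hf)]. }
destruct (network_injective_seq G mul inv e T HT HH N0 HN0 not_discrete) as [s [sN0 s_inj]].
destruct (exists_square_inj _ N0 s sN0 s_inj) as [pair Hpair].
destruct (coarse_base_inj_N0 G mul inv e T f U1 N0 pair Hpair s sN0 s_inj) as [g Hg].
exists (coarse G mul inv e T f U1 N0).
split; [apply coarse_group_topology; assumption|].
split; [apply coarse_hausdorff; assumption|].
split.
- exists (coarse_base G mul inv e T f U1 N0).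
  split; [apply is_base_coarse_base; assumption|].
  intros N HN. destruct (N0_least (exist _ N HN)) as [h Hh].
  exact (card_le_of_inj_into _ _ _ (inj_into_comp _ _ _ _ _ Hg Hh)).
- intro Hr. apply (not_open_map_coarse G mul inv e Hgrp T HT f Hf Hfc U1 NU1 N0 HU1).
  apply Hr; [exact Hf|apply continuous_coarse; exact Hf].
Qed.
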